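(* Let $A,B$ be nonzero finite-dimensional $K$-subspaces of $L$. Then there exist nonzero finite-dimensional $K$-subspaces $E,F$ of $L$ such that: (1) $\langle EF\rangle\subset\langle AB\rangle$; (2) $\dim_KE+\dim_KF\geq\dim_KA+\dim_KB$; (3) $ED=E$ and $DF=F$, where $D=E_*^{-1}E\cap FF_*^{-1}$.
   Context: $K$ is a commutative field and $L$ is a (possibly noncommutative) division ring containing $K$ in its center. For $S\subset L$, $\langle S\rangle$ denotes the $K$-subspace of $L$ spanned by $S$. For subsets $S_1,S_2,\dots$ of $L$, $S_1S_2=\{s_1s_2\mid s_1\in S_1,s_2\in S_2\}$ (product set), and similarly for more factors. For $X\subset L$, $X_*=X\setminus\{0\}$ and $X_*^{-1}=\{x^{-1}\mid x\in X_*\}$. *)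

From HB Require Import structures.
From mathcomp Require Import all_boot all_order all_algebra.
Set Implicit Arguments. Unset Strict Implicit. Unset Printing Implicit Defensive.
Import GRing.Theory.
Local Open Scope ring_scope.

(* L : unitAlgType K is an algebra over the field K (scalars commute with
   everything, i.e. K lies in the center); the division-ring property is an
   explicit hypothesis of the theorem. *)

Section Defs.
Variables (K : fieldType) (L : unitAlgType K).

Definition kspan (S : L -> Prop) : L -> Prop :=
  fun x => exists (n : nat) (c : 'I_n -> K) (v : 'I_n -> L),
    (forall i, S (v i)) /\ x = \sum_(i < n) c i *: v i.

Definition kfree (n : nat) (v : 'I_n -> L) : Prop :=
  forall c : 'I_n -> K, \sum_(i < n) c i *: v i = 0 -> forall i, c i = 0.

Definition has_kdim (V : L -> Prop) (n : nat) : Prop :=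
  exists v : 'I_n -> L, kfree v /\
    (forall x, V x <-> kspan (fun y => exists i, y = v i) x).

Definition prodset (S T : L -> Prop) : L -> Prop :=
  fun x => exists s t, S s /\ T t /\ x = s * t.

Definition invl_prod (X : L -> Prop) : L -> Prop :=
  fun x => exists a b, X a /\ a != 0 /\ X b /\ x = a^-1 * b.

Definition prod_invr (X : L -> Prop) : L -> Prop :=
  fun x => exists a b, X a /\ X b /\ b != 0 /\ x = a * b^-1.

End Defs.

From HB Require Import structures.
From mathcomp Require Import all_boot all_order all_algebra zify.
From Stdlib Require Import Classical.
Set Implicit Arguments. Unset Strict Implicit. Unset Printing Implicit Defensive.
Import GRing.Theory.
Local Open Scope ring_scope.

(* Call a pair (E, F) of nonzero finite-dimensional subspaces
   admissible if it satisfies (1) and (2).  Since 1 lies in D, condition (3)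
   says exactly that E d <= E and d F <= F for every nonzero d in D.  If this
   fails for some d, the pairs (E + E d, F :&: d^-1 F) and
   (E :&: E d^-1, F + d F) still satisfy (1), and by Grassmann's formula
   their dimension sums add up to 2 (dim E + dim F).  Hence one of them has
   a larger dimension sum, or the same sum and a smaller F.  As dim E and
   dim F are bounded by the dimension of <AB>, a lexicographic descent
   starting from (A, B) ends at an admissible pair satisfying (3). *)

Section FiniteFamilies.
Variables (K : fieldType) (V : lmodType K).

Definition fspan n (v : 'I_n -> V) (x : V) : Prop :=
  exists c : 'I_n -> K, x = \sum_(i < n) c i *: v i.

Definition lfree n (v : 'I_n -> V) : Prop :=
  forall c : 'I_n -> K, \sum_(i < n) c i *: v i = 0 -> forall i, c i = 0.

Definition fcat n1 n2 (v1 : 'I_n1 -> V) (v2 : 'I_n2 -> V) (i : 'I_(n1 + n2)) : V :=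
  match split i with inl j => v1 j | inr j => v2 j end.

Lemma fspan0 n (v : 'I_n -> V) : fspan v 0.
Proof. by exists (fun=> 0); rewrite big1 // => i _; rewrite scale0r. Qed.

Lemma fspanD n (v : 'I_n -> V) x y : fspan v x -> fspan v y -> fspan v (x + y).
Proof.
move=> [c ->] [d ->]; exists (fun i => c i + d i).
by rewrite -big_split; apply: eq_bigr => i _; rewrite scalerDl.
Qed.

Lemma fspanZ n (v : 'I_n -> V) a x : fspan v x -> fspan v (a *: x).
Proof.
move=> [c ->]; exists (fun i => a * c i).
by rewrite scaler_sumr; apply: eq_bigr => i _; rewrite scalerA.
Qed.

Lemma sum_delta n (v : 'I_n -> V) i : \sum_(j < n) (j == i)%:R *: v j = v i.
Proof.
rewrite (bigD1 i) //= eqxx scale1r big1 ?addr0 //.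
by move=> j /negbTE ->; rewrite scale0r.
Qed.

Lemma fspan_gen n (v : 'I_n -> V) i : fspan v (v i).
Proof. by exists (fun j => (j == i)%:R); rewrite sum_delta. Qed.

Lemma fspan_comb n (v : 'I_n -> V) k (c : 'I_k -> K) (u : 'I_k -> V) :
  (forall j, fspan v (u j)) -> fspan v (\sum_(j < k) c j *: u j).
Proof.
move=> uv; apply: (big_ind (fspan v)); [exact: fspan0 | exact: fspanD |].
by move=> j _; apply: fspanZ.
Qed.

Lemma fspan_trans n (v : 'I_n -> V) k (u : 'I_k -> V) x :
  (forall j, fspan v (u j)) -> fspan u x -> fspan v x.
Proof. by move=> uv [c ->]; apply: fspan_comb. Qed.

Lemma sum_fcat n1 n2 (v1 : 'I_n1 -> V) (v2 : 'I_n2 -> V) (c : 'I_(n1 + n2) -> K) :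
  \sum_i c i *: fcat v1 v2 i =
  \sum_i c (lshift n2 i) *: v1 i + \sum_j c (rshift n1 j) *: v2 j.
Proof.
rewrite big_split_ord /fcat; congr (_ + _); apply: eq_bigr => i _.
  by rewrite (unsplitK (inl i)).
by rewrite (unsplitK (inr i)).
Qed.

Lemma fspan_cat n1 n2 (v1 : 'I_n1 -> V) (v2 : 'I_n2 -> V) x :
  fspan (fcat v1 v2) x <-> exists y z, fspan v1 y /\ fspan v2 z /\ x = y + z.
Proof.
split=> [[c ->]|[y [z [[c1 ->] [[c2 ->] ->]]]]].
  rewrite sum_fcat; do 2 eexists; split; last split; last reflexivity.
  - by exists (fun i => c (lshift n2 i)).
  - by exists (fun j => c (rshift n1 j)).
exists (fun i => match split i with inl j => c1 j | inr j => c2 j end).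
by rewrite sum_fcat; congr (_ + _); apply: eq_bigr => i _;
  rewrite ?(unsplitK (inl i)) ?(unsplitK (inr i)).
Qed.

Lemma lfree_cat1 n (v : 'I_n -> V) x :
  lfree v -> ~ fspan v x -> lfree (fcat v (fun _ : 'I_1 => x)).
Proof.
move=> freev xv c; rewrite sum_fcat big_ord1 => sum0.
have cx : c (rshift n ord0) = 0.
  have [//|cx0] := eqVneq (c (rshift n ord0)) 0; case: xv.
  have -> : x = (c (rshift n ord0))^-1 *:
      - \sum_(i < n) c (lshift 1 i) *: v i.
    move/eqP: sum0; rewrite addrC addr_eq0 => /eqP <-.
    by rewrite scalerA mulVf ?scale1r.
  by apply: fspanZ; rewrite -scaleN1r; apply/fspanZ/fspan_comb/fspan_gen.
rewrite cx scale0r addr0 in sum0.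
move=> i; rewrite -(splitK i); case: (split i) => [j|j] /=.
  exact: freev sum0 j.
by rewrite ord1.
Qed.

Lemma fspan_recr n (v : 'I_n.+1 -> V) x :
  fspan v x <-> exists y a,
    fspan (fun j : 'I_n => v (widen_ord (leqnSn n) j)) y /\ x = y + a *: v ord_max.
Proof.
split=> [[c ->]|[y [a [yv ->]]]].
  rewrite big_ord_recr /=; do 2 eexists; split; last reflexivity.
  by exists (fun i => c (widen_ord (leqnSn n) i)).
apply: fspanD; last exact/fspanZ/fspan_gen.
by apply: fspan_trans yv => j; apply: fspan_gen.
Qed.

Lemma basis_extraction k (u : 'I_k -> V) :
  exists m (w : 'I_m -> V), lfree w /\ forall x, fspan u x <-> fspan w x.
Proof.
elim: k u => [|k IH] u.
  by exists 0%N, u; split=> [c _ []|].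
have [m [w [freew spanw]]] := IH (fun j => u (widen_ord (leqnSn k) j)).
have spanu x : fspan u x <-> exists y a, fspan w y /\ x = y + a *: u ord_max.
  rewrite fspan_recr; split=> [[y [a [yu ->]]]|[y [a [yw ->]]]];
    by exists y, a; split=> //; apply/spanw.
have [uw|uNw] := classic (fspan w (u ord_max)).
  exists m, w; split=> // x; rewrite spanu; split=> [[y [a [yw ->]]]|xw].
    exact/fspanD/fspanZ.
  by exists x, 0; rewrite scale0r addr0.
exists (m + 1)%N, (fcat w (fun=> u ord_max)); split; first exact: lfree_cat1.
move=> x; rewrite spanu fspan_cat; split=> [[y [a [yw ->]]]|[y [z [yw [[c zE] ->]]]]].
  exists y, (a *: u ord_max); do 2 split=> //.
  exact/fspanZ/(fspan_gen _ ord0).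
by exists y, (c ord0); rewrite zE big_ord1.
Qed.

Definition comb m (w : 'I_m -> V) (r : 'rV[K]_m) : V := \sum_(j < m) r 0 j *: w j.

Fact comb_is_linear m (w : 'I_m -> V) : linear (comb w).
Proof.
move=> a r s; rewrite /comb scaler_sumr -big_split; apply: eq_bigr => j _.
by rewrite !mxE scalerDl scalerA.
Qed.

HB.instance Definition _ m (w : 'I_m -> V) :=
  GRing.isLinear.Build K 'rV[K]_m V *:%R (comb w) (comb_is_linear w).

Lemma comb_mul m (w : 'I_m -> V) k (a : 'rV_k) (M : 'M_(k, m)) :
  comb w (a *m M) = \sum_(i < k) a 0 i *: comb w (row i M).
Proof. by rewrite mulmx_sum_row linear_sum; apply: eq_bigr => i _; rewrite linearZ. Qed.

Lemma comb_inj m (w : 'I_m -> V) : lfree w -> injective (comb w).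
Proof.
move=> freew r s eq_rs; apply/eqP; rewrite -subr_eq0; apply/eqP/rowP => j.
have : comb w (r - s) = 0 by rewrite linearB /= eq_rs subrr.
by move/freew/(_ j); rewrite !mxE.
Qed.

Lemma fspan_combE m (w : 'I_m -> V) x : fspan w x <-> exists r, x = comb w r.
Proof.
split=> [[c ->]|[r ->]]; last by exists (fun j => r 0 j).
by exists (\row_j c j); apply: eq_bigr => j _; rewrite mxE.
Qed.

Lemma coords m (w : 'I_m -> V) n (v : 'I_n -> V) :
  (forall i, fspan w (v i)) ->
  exists M : 'M[K]_(n, m), forall i, v i = comb w (row i M).
Proof.
move=> vw; have [f fE] := fin_all_exists (fun i => iffLR (fspan_combE w _) (vw i)).
by exists (\matrix_i f i) => i; rewrite rowK.
Qed.

Lemma lfree_row_free m (w : 'I_m -> V) n (v : 'I_n -> V) (M : 'M[K]_(n, m)) :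
  lfree v -> (forall i, v i = comb w (row i M)) -> row_free M.
Proof.
move=> freev vM; apply/inj_row_free => a aM0; apply/rowP => i; rewrite mxE.
have : comb w (a *m M) = 0 by rewrite aM0 linear0.
rewrite comb_mul; under eq_bigr do rewrite -vM.
by move/freev/(_ i).
Qed.

Lemma row_free_lfree m (w : 'I_m -> V) n (v : 'I_n -> V) (M : 'M[K]_(n, m)) :
  lfree w -> row_free M -> (forall i, v i = comb w (row i M)) -> lfree v.
Proof.
move=> freew freeM vM c sum0 i.
have : (\row_j c j) *m M = 0 *m M.
  apply: (comb_inj freew); rewrite mul0mx linear0 comb_mul -[RHS]sum0.
  by apply: eq_bigr => j _; rewrite mxE vM.
by move/(row_free_inj freeM)/rowP => /(_ i); rewrite !mxE.
Qed.

Lemma steinitz n (v : 'I_n -> V) k (u : 'I_k -> V) :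
  lfree v -> (forall i, fspan u (v i)) -> (n <= k)%N.
Proof.
move=> freev vu; have [M vM] := coords vu.
by have /eqP <- := lfree_row_free freev vM; apply: rank_leq_col.
Qed.

Definition rowspace m (w : 'I_m -> V) k (M : 'M[K]_(k, m)) (x : V) : Prop :=
  exists2 r, (r <= M)%MS & x = comb w r.

Lemma rowspaceP m (w : 'I_m -> V) k (M : 'M[K]_(k, m)) x :
  rowspace w M x <-> exists a, x = comb w (a *m M).
Proof.
split=> [[r /submxP [a ->] ->]|[a ->]]; first by exists a.
by exists (a *m M); rewrite ?submxMl.
Qed.

Lemma rowspace_sub m (w : 'I_m -> V) k1 k2 (M1 : 'M[K]_(k1, m)) (M2 : 'M[K]_(k2, m)) x :
  (M1 <= M2)%MS -> rowspace w M1 x -> rowspace w M2 x.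
Proof. by move=> sM12 [r rM1 ->]; exists r => //; apply: submx_trans sM12. Qed.

Lemma rowspace_fspan m (w : 'I_m -> V) n (v : 'I_n -> V) (M : 'M[K]_(n, m)) x :
  (forall i, v i = comb w (row i M)) -> fspan v x <-> rowspace w M x.
Proof.
move=> vM; rewrite rowspaceP; split=> [[c ->]|[a ->]].
  by exists (\row_i c i); rewrite comb_mul; apply: eq_bigr => i _; rewrite mxE vM.
by exists (fun i => a 0 i); rewrite comb_mul; apply: eq_bigr => i _; rewrite vM.
Qed.

Lemma rowspace_adds m (w : 'I_m -> V) k1 k2 (M1 : 'M[K]_(k1, m)) (M2 : 'M[K]_(k2, m)) x :
  rowspace w (M1 + M2)%MS x <->
  exists y z, rowspace w M1 y /\ rowspace w M2 z /\ x = y + z.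
Proof.
split=> [[r /sub_addsmxP [[a1 a2] /= ->] ->]|[y [z [[r1 rM1 ->] [[r2 rM2 ->] ->]]]]].
  by exists (comb w (a1 *m M1)), (comb w (a2 *m M2)); rewrite linearD !rowspaceP;
    split; [exists a1 | split; [exists a2 |]].
by exists (r1 + r2); rewrite ?linearD ?addmx_sub_adds.
Qed.

Lemma rowspace_cap m (w : 'I_m -> V) k1 k2 (M1 : 'M[K]_(k1, m)) (M2 : 'M[K]_(k2, m)) x :
  lfree w -> rowspace w (M1 :&: M2)%MS x <-> rowspace w M1 x /\ rowspace w M2 x.
Proof.
move=> freew; split=> [xM|[[r1 rM1 ->] [r2 rM2 eq_r]]].
  by split; apply: rowspace_sub xM; rewrite ?capmxSl ?capmxSr.
move: rM2; rewrite -(comb_inj freew eq_r) => rM2.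
by exists r1; rewrite ?sub_capmx ?rM1.
Qed.

End FiniteFamilies.

Section Subspaces.
Variables (K : fieldType) (L : unitAlgType K).
Implicit Types (X Y U W : L -> Prop).

Lemma kspan_sub X x : X x -> kspan X x.
Proof.
by move=> Xx; exists 1%N, (fun=> 1), (fun=> x); split=> //; rewrite big_ord1 scale1r.
Qed.

Lemma kspan0 X : kspan X 0.
Proof. by exists 0%N, (fun=> 0), (fun=> 0); split=> [[]//|]; rewrite big_ord0. Qed.

Lemma kspanD X x y : kspan X x -> kspan X y -> kspan X (x + y).
Proof.
move=> [n1 [c1 [v1 [Xv1 ->]]]] [n2 [c2 [v2 [Xv2 ->]]]].
exists (n1 + n2)%N, (fun i => match split i with inl j => c1 j | inr j => c2 j end),
  (fcat v1 v2); split; first by move=> i; rewrite /fcat; case: (split i).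
by rewrite sum_fcat; congr (_ + _); apply: eq_bigr => i _;
  rewrite ?(unsplitK (inl i)) ?(unsplitK (inr i)).
Qed.

Lemma kspanZ X a x : kspan X x -> kspan X (a *: x).
Proof.
move=> [n [c [v [Xv ->]]]]; exists n, (fun i => a * c i), v; split=> //.
by rewrite scaler_sumr; apply: eq_bigr => i _; rewrite scalerA.
Qed.

Lemma kspan_mono X Y x : (forall y, X y -> kspan Y y) -> kspan X x -> kspan Y x.
Proof.
move=> XY [n [c [v [Xv ->]]]].
apply: (big_ind (kspan Y)); [exact: kspan0 | exact: kspanD |].
by move=> i _; apply/kspanZ/XY.
Qed.

Lemma kspan_fspan n (v : 'I_n -> L) x :
  kspan (fun y => exists i, y = v i) x <-> fspan v x.
Proof.
split=> [[k [c [u [uv ->]]]]|[c ->]]; last by exists n, c, v; split=> // i; exists i.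
by apply: fspan_comb => j; have [i ->] := uv j; apply: fspan_gen.
Qed.

Lemma has_kdim_fspan X n :
  has_kdim X n <-> exists v : 'I_n -> L, lfree v /\ forall x, X x <-> fspan v x.
Proof.
by split=> [[v [freev Xv]]|[v [freev Xv]]]; exists v; split=> // x;
  rewrite Xv kspan_fspan.
Qed.

Lemma has_kdim_ext X Y n : has_kdim X n -> (forall x, X x <-> Y x) -> has_kdim Y n.
Proof. by move=> [v [freev Xv]] XY; exists v; split=> // x; rewrite -XY. Qed.

Lemma has_kdim0 X n : has_kdim X n -> X 0.
Proof. by move/has_kdim_fspan=> [v [_ ->]]; apply: fspan0. Qed.

Lemma has_kdim_gt0 X n x : has_kdim X n -> X x -> x != 0 -> (0 < n)%N.
Proof. by case: n => // /has_kdim_fspan [v [_ ->]] [c ->]; rewrite big_ord0 eqxx. Qed.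

Lemma has_kdim_nonzero X n : has_kdim X n -> (0 < n)%N -> exists2 a, X a & a != 0.
Proof.
move=> /has_kdim_fspan [v [freev Xv]] n_gt0; exists (v (Ordinal n_gt0)).
  exact/Xv/fspan_gen.
apply/eqP => v0; have := sum_delta v (Ordinal n_gt0); rewrite v0.
by move/freev/(_ (Ordinal n_gt0)); rewrite eqxx => /eqP; rewrite oner_eq0.
Qed.

Lemma has_kdim_rowspace m (w : 'I_m -> L) k (M : 'M[K]_(k, m)) :
  lfree w -> has_kdim (rowspace w M) (\rank M).
Proof.
move=> freew; apply/has_kdim_fspan.
pose b i := comb w (row i (row_base M)).
have bB i : b i = comb w (row i (row_base M)) by [].
exists b; split; first exact: row_free_lfree freew (row_base_free M) bB.
move=> x; rewrite (rowspace_fspan _ bB).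
by split; apply: rowspace_sub; rewrite eq_row_base.
Qed.

Definition sumset U W (x : L) : Prop := exists y z, U y /\ W z /\ x = y + z.

Lemma grassmann U W p q : has_kdim U p -> has_kdim W q ->
  exists s t, [/\ has_kdim (sumset U W) s, has_kdim (fun x => U x /\ W x) t,
    (s + t = p + q)%N, (p <= s)%N & (s = p -> forall x, W x -> U x)].
Proof.
move=> /has_kdim_fspan [e [freee Ue]] /has_kdim_fspan [f [freef Wf]].
have [m [w [freew spanw]]] := basis_extraction (fcat e f).
have [ME eME] : exists ME : 'M_(p, m), forall i, e i = comb w (row i ME).
  apply: coords => i; apply/spanw/fspan_cat; exists (e i), 0.
  by rewrite addr0; split; [apply: fspan_gen | split; [apply: fspan0 |]].
have [MF fMF] : exists MF : 'M_(q, m), forall i, f i = comb w (row i MF).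
  apply: coords => i; apply/spanw/fspan_cat; exists 0, (f i).
  by rewrite add0r; split; [apply: fspan0 | split; [apply: fspan_gen |]].
have /eqP rankE := lfree_row_free freee eME.
have /eqP rankF := lfree_row_free freef fMF.
have UE x : U x <-> rowspace w ME x by rewrite Ue; apply: rowspace_fspan.
have WF x : W x <-> rowspace w MF x by rewrite Wf; apply: rowspace_fspan.
have [le_sum eq_sum] := mxrank_leqif_sup (addsmxSl ME MF).
exists (\rank (ME + MF))%MS, (\rank (ME :&: MF))%MS; split.
- apply: has_kdim_ext (has_kdim_rowspace _ freew) _ => x; rewrite rowspace_adds.
  by split=> [[y [z [/UE Uy [/WF Wz ->]]]]|[y [z [/UE Uy [/WF Wz ->]]]]];
    exists y, z.
- apply: has_kdim_ext (has_kdim_rowspace _ freew) _ => x.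
  by rewrite rowspace_cap // UE WF.
- by rewrite mxrank_sum_cap rankE rankF.
- by move: le_sum; rewrite rankE.
- move=> sum_p x /WF Wx; apply/UE.
  have : (ME + MF <= ME)%MS by rewrite -eq_sum sum_p rankE.
  by rewrite addsmx_sub => /andP [_ sMF]; apply: rowspace_sub sMF Wx.
Qed.

Lemma has_kdim_preim X n (f g : {linear L -> L}) :
  cancel f g -> cancel g f -> has_kdim X n -> has_kdim (fun y => X (f y)) n.
Proof.
move=> fK gK /has_kdim_fspan [v [freev Xv]]; apply/has_kdim_fspan.
have f_comb (c : 'I_n -> K) :
    f (\sum_(i < n) c i *: g (v i)) = \sum_(i < n) c i *: v i.
  rewrite linear_sum; apply: eq_bigr => i _.
  by rewrite -{2}(gK (v i)); exact: linearZ.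
exists (fun i => g (v i)); split.
  by move=> c sum0; apply: freev; rewrite -f_comb sum0 linear0.
move=> y; rewrite Xv; split=> [[c fy]|[c ->]]; last by exists c; rewrite f_comb.
by exists c; rewrite -[y]fK fy -f_comb fK.
Qed.

(* Grassmann's formula for U and its image f(U) = {z | U (g z)} under a
   linear automorphism f with inverse g; the intersection U :&: f(U) is
   pulled back along f to {y | U y /\ U (f y)}. *)
Lemma automorphism_dims U p (f g : {linear L -> L}) :
  cancel f g -> cancel g f -> has_kdim U p ->
  exists s t, [/\ has_kdim (sumset U (fun z => U (g z))) s,
    has_kdim (fun y => U y /\ U (f y)) t, (s + t = p + p)%N, (p <= s)%N &
    (s = p -> forall y, U y -> U (f y))].
Proof.
move=> fK gK hU; have hgU := has_kdim_preim gK fK hU.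
have [s [t [hS hT sum_st le_ps eq_ps]]] := grassmann hU hgU.
exists s, t; split=> //.
- apply: has_kdim_ext (has_kdim_preim fK gK hT) _ => y.
  by rewrite fK; split=> [[]|[]].
- by move=> /eq_ps sub_gU y Uy; apply: sub_gU; rewrite fK.
Qed.
End Subspaces.

Section Products.
Variables (K : fieldType) (L : unitAlgType K).
Implicit Types (A B E F : L -> Prop).

Lemma lfree_mulr n (v : 'I_n -> L) x :
  x \is a GRing.unit -> lfree v -> lfree (fun i => v i * x).
Proof.
move=> xu freev c sum0; apply: freev.
rewrite -[LHS](mulrK xu) mulr_suml; under eq_bigr do rewrite -scalerAl.
by rewrite sum0 mul0r.
Qed.

Lemma lfree_mull n (v : 'I_n -> L) x :
  x \is a GRing.unit -> lfree v -> lfree (fun i => x * v i).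
Proof.
move=> xu freev c sum0; apply: freev.
rewrite -[LHS](mulKr xu) mulr_sumr; under eq_bigr do rewrite -scalerAr.
by rewrite sum0 mulr0.
Qed.

Lemma kspan_prod_finite A B nA nB : has_kdim A nA -> has_kdim B nB ->
  exists N (u : 'I_N -> L), forall x, kspan (prodset A B) x -> fspan u x.
Proof.
move=> /has_kdim_fspan [a [_ Aa]] /has_kdim_fspan [b [_ Bb]].
pose ab (k : 'I_#|{: 'I_nA * 'I_nB}|) := a (enum_val k).1 * b (enum_val k).2.
have ab_gen i j : fspan ab (a i * b j).
  by have := fspan_gen ab (enum_rank (i, j)); rewrite /ab enum_rankK.
exists _, ab => x ABx; apply/kspan_fspan; apply: kspan_mono ABx.
move=> y [s [t [/Aa [c ->] [/Bb [e ->] ->]]]]; apply/kspan_fspan.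
rewrite mulr_suml; under eq_bigr do rewrite -scalerAl mulr_sumr.
apply: fspan_comb => i; under eq_bigr do rewrite -scalerAr.
by apply: fspan_comb => j; apply: ab_gen.
Qed.

(* Moving a unit multiplier d from F to E keeps the product set inside <EF>:
   (y + z) t = y t + (z d^-1) (d t). *)
Lemma kspan_prod_shiftr E F d x : d \is a GRing.unit ->
  kspan (prodset (sumset E (fun z => E (z / d))) (fun y => F y /\ F (d * y))) x ->
  kspan (prodset E F) x.
Proof.
move=> du; apply: kspan_mono => _ [_ [t [[y [z [Ey [Ezd ->]]]] [[Ft Fdt] ->]]]].
have -> : (y + z) * t = y * t + z / d * (d * t) by rewrite mulrDl mulrA (mulrVK du).
by apply: kspanD; apply: kspan_sub; [exists y, t | exists (z / d), (d * t)].
Qed.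

Lemma kspan_prod_shiftl E F d x : d \is a GRing.unit ->
  kspan (prodset (fun y => E y /\ E (y * d)) (sumset F (fun z => F (d^-1 * z)))) x ->
  kspan (prodset E F) x.
Proof.
move=> du; apply: kspan_mono => _ [s [_ [[Es Esd] [[y [z [Fy [Fdz ->]]]] ->]]]].
have -> : s * (y + z) = s * y + s * d * (d^-1 * z) by rewrite mulrDr -mulrA (mulVKr du).
by apply: kspanD; apply: kspan_sub; [exists s, y | exists (s * d), (d^-1 * z)].
Qed.

End Products.

Section DivisionRing.
Variables (K : fieldType) (L : unitAlgType K).
Hypothesis hdiv : forall x : L, x != 0 -> x \is a GRing.unit.
Implicit Types (A B E F : L -> Prop).

(* If <EF> lies in a space spanned by N vectors, then dim E, dim F <= N:
   E f0 and e0 F are copies of E and F inside <EF>. *)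
Lemma dim_bound E F p q N (u : 'I_N -> L) :
  has_kdim E p -> has_kdim F q -> (0 < p)%N -> (0 < q)%N ->
  (forall x, kspan (prodset E F) x -> fspan u x) -> (p <= N)%N /\ (q <= N)%N.
Proof.
move=> hE hF p_gt0 q_gt0 EFu.
have [e0 Ee0 e0_nz] := has_kdim_nonzero hE p_gt0.
have [f0 Ff0 f0_nz] := has_kdim_nonzero hF q_gt0.
move: hE hF => /has_kdim_fspan [e [freee Ee]] /has_kdim_fspan [f [freef Ff]].
split.
  apply: steinitz (lfree_mulr (hdiv f0_nz) freee) _ => i.
  by apply/EFu/kspan_sub; exists (e i), f0; split; [apply/Ee/fspan_gen|].
apply: steinitz (lfree_mull (hdiv e0_nz) freef) _ => i.
by apply/EFu/kspan_sub; exists e0, (f i); do 2 split=> //; apply/Ff/fspan_gen.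
Qed.

Definition dset E F (x : L) : Prop := invl_prod E x /\ prod_invr F x.

Definition balanced E F : Prop :=
  (forall x, prodset E (dset E F) x <-> E x) /\
  (forall x, prodset (dset E F) F x <-> F x).

(* Since 1 \in D, condition (3) amounts to E d \subset E and d F \subset F
   for every nonzero d in D. *)
Lemma balanced_of_stable E F p q :
  has_kdim E p -> has_kdim F q -> (0 < p)%N -> (0 < q)%N ->
  (forall d, dset E F d -> d != 0 ->
     (forall y, E y -> E (y * d)) /\ (forall y, F y -> F (d * y))) ->
  balanced E F.
Proof.
move=> hE hF p_gt0 q_gt0 stable.
have [a Ea a_nz] := has_kdim_nonzero hE p_gt0.
have [b Fb b_nz] := has_kdim_nonzero hF q_gt0.
have D1 : dset E F 1.
  by split; [exists a, a; rewrite mulVr ?hdiv | exists b, b; rewrite divrr ?hdiv].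
split=> x; split.
- move=> [y [d [Ey [Dd ->]]]]; have [->|d_nz] := eqVneq d 0.
    by rewrite mulr0; apply: has_kdim0 hE.
  exact: (stable d Dd d_nz).1.
- by move=> Ex; exists x, 1; rewrite mulr1.
- move=> [d [y [Dd [Fy ->]]]]; have [->|d_nz] := eqVneq d 0.
    by rewrite mul0r; apply: has_kdim0 hF.
  exact: (stable d Dd d_nz).2.
- by move=> Fx; exists 1, x; rewrite mul1r.
Qed.

Definition admissible A B nA nB E F p q : Prop :=
  (0 < p)%N /\ (0 < q)%N /\ has_kdim E p /\ has_kdim F q /\
  (forall x, kspan (prodset E F) x -> kspan (prodset A B) x) /\
  (nA + nB <= p + q)%N.

(* If d in
   D is nonzero with E d or d F not contained in E resp. F, replace (E, F)
   by (E + E d, F :&: d^-1 F) or by (E :&: E d^-1, F + d F); by Grassmann's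
   formula the two new dimension sums add up to 2 (dim E + dim F). *)
Lemma improve A B nA nB E F p q : admissible A B nA nB E F p q ->
  balanced E F \/
  exists E' F' p' q', admissible A B nA nB E' F' p' q' /\
    (p + q < p' + q' \/ p' + q' = p + q /\ q' < q)%N.
Proof.
move=> [p_gt0 [q_gt0 [hE [hF [EF_AB sum_ge]]]]].
pose stable d := (forall y, E y -> E (y * d)) /\ (forall y, F y -> F (d * y)).
have [all_stable|not_all] := classic (forall d, dset E F d -> d != 0 -> stable d).
  by left; apply: balanced_of_stable hE hF p_gt0 q_gt0 all_stable.
have [d [Dd [d_nz unstable]]] : exists d, dset E F d /\ d != 0 /\ ~ stable d.
  apply: NNPP => none; apply: not_all => d Dd d_nz.
  by apply: NNPP => unstable; apply: none; exists d.
right; have du := hdiv d_nz.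
have [[a [b [Ea [a_nz [Eb db]]]]] [f [g [Ff [Fg [g_nz dfg]]]]]] := Dd.
have Ead : E (a * d) by rewrite db mulVKr ?hdiv.
have Fdg : F (d * g) by rewrite dfg mulrVK ?hdiv.
have [s1 [t1 [hS1 hT1 sum1 le_ps1 eq_ps1]]] :=
  automorphism_dims (f := d \o* idfun) (g := d^-1 \o* idfun) (mulrK du) (mulrVK du) hE.
have [s2 [t2 [hS2 hT2 sum2 le_qs2 eq_qs2]]] :=
  automorphism_dims (f := d \*o idfun) (g := d^-1 \*o idfun) (mulKr du) (mulVKr du) hF.
have t1_gt0 : (0 < t1)%N by apply: has_kdim_gt0 hT1 (conj Ea Ead) a_nz.
have t2_gt0 : (0 < t2)%N by apply: has_kdim_gt0 hT2 (conj Fg Fdg) g_nz.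
have [lt_sum|ge_sum] := ltnP (s1 + t2) (p + q).
  exists (fun y => E y /\ E (y * d)), (sumset F (fun z => F (d^-1 * z))), t1, s2.
  split; last by left; lia.
  do 4 (split; first by done || lia).
  by split; [move=> x /(kspan_prod_shiftl du)/EF_AB | lia].
exists (sumset E (fun z => E (z / d))), (fun y => F y /\ F (d * y)), s1, t2.
split.
  do 4 (split; first by done || lia).
  by split; [move=> x /(kspan_prod_shiftr du)/EF_AB | lia].
have [gt_sum|eq_sum] : (p + q < s1 + t2 \/ s1 + t2 = p + q)%N by lia.
  by left.
right; split=> //; rewrite ltn_neqAle; apply/andP; split; last by lia.
by apply/eqP => t2q; apply: unstable; split; [apply: eq_ps1 | apply: eq_qs2]; lia.
Qed.
End DivisionRing.

Lemma lex_descent (S : Type) (P Q : S -> Prop) (f g : S -> nat) :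
  (forall s, P s -> Q s \/
     exists2 s', P s' & (f s' < f s \/ f s' = f s /\ g s' < g s)%N) ->
  forall s, P s -> exists2 s', P s' & Q s'.
Proof.
move=> step s; move: {2}(f s) (erefl (f s)) => n; elim/ltn_ind: n s => n IHn s.
move: {2}(g s) (erefl (g s)) => k; elim/ltn_ind: k s => k IHk s gs fs Ps.
have [Qs|[s' Ps' [lt_f|[eq_f lt_g]]]] := step s Ps; first by exists s.
  by apply: (IHn (f s')) => //; rewrite -fs.
by apply: (IHk (g s')) => //; rewrite ?eq_f -?gs.
Qed.

Record candidate (T : Type) :=
  Candidate { cE : T -> Prop; cF : T -> Prop; dimE : nat; dimF : nat }.

Theorem mainTheorem4 (K : fieldType) (L : unitAlgType K)
  (hdiv : forall x : L, x != 0 -> x \is a GRing.unit)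
  (A B : L -> Prop) (nA nB : nat) :
  (0 < nA)%N -> (0 < nB)%N -> has_kdim A nA -> has_kdim B nB ->
  exists (E F : L -> Prop) (nE nF : nat),
    (0 < nE)%N /\ (0 < nF)%N /\ has_kdim E nE /\ has_kdim F nF /\
    (* (1) <EF> is contained in <AB> *)
    (forall x, kspan (prodset E F) x -> kspan (prodset A B) x) /\
    (* (2) *)
    (nA + nB <= nE + nF)%N /\
    (* (3) with D = E_*^{-1} E \cap F F_*^{-1} *)
    (let D := fun x => invl_prod E x /\ prod_invr F x in
     (forall x, prodset E D x <-> E x) /\ (forall x, prodset D F x <-> F x)).
Proof.
move=> nA_gt0 nB_gt0 hA hB.
have [N [u ABu]] := kspan_prod_finite hA hB.
pose adm (c : candidate L) := admissible A B nA nB (cE c) (cF c) (dimE c) (dimF c).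
have bounded c : adm c -> (dimE c + dimF c <= 2 * N)%N.
  move=> [p_gt0 [q_gt0 [hE [hF [EF_AB _]]]]].
  by have [] := dim_bound hdiv hE hF p_gt0 q_gt0 (fun x EFx => ABu x (EF_AB x EFx)); lia.
have [[E F p q] [p_gt0 [q_gt0 [hE [hF [EF_AB sum_ge]]]]] bal] :
    exists2 c, adm c & balanced (cE c) (cF c).
  apply: (@lex_descent _ adm _ (fun c => 2 * N - (dimE c + dimF c))%N (@dimF L))
    (Candidate A B nA nB) _; last by do 5 split=> //.
  move=> [E F p q] admc.
  have [bal|[E' [F' [p' [q' [adm' better]]]]]] := improve hdiv admc; first by left.
  right; exists (Candidate E' F' p' q') => //=.
  by have /= := bounded (Candidate E' F' p' q') adm'; move: better => /=; lia.
by exists E, F, p, q.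
Qed.
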